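(* Let $\mathcal{M}$ be the set of compactly supported probability distributions on $\mathbb{R}$ and $T:\mathcal{M}\to\mathcal{M}$. (i) $T\circ T^u=T^u\circ T$ for every increasing left-continuous $u:\mathbb{R}\to\mathbb{R}$ if and only if $T=T_d$ for some right-continuous distortion function $d$. (ii) $T\circ T_d=T_d\circ T$ for every right-continuous distortion function $d$ if and only if $T=T^u$ for some increasing left-continuous $u:\mathbb{R}\to\mathbb{R}$.
   Context: Increasing means non-decreasing. A distortion function is an increasing function $d:[0,1]\to[0,1]$ with $d(0)=0$, $d(1)=1$. $T_d(F)(x)=\lim_{y\downarrow x}d(F(y))$ for $x\in\mathbb{R}$. For increasing $u$, $T^u(F)=F\circ u^{-1}$ is the distribution of $u(X)$ when $X\sim F$. *)

(* distributions on R represented by their CDFs. *)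
From HB Require Import structures.
From mathcomp Require Import all_boot all_order all_algebra.
From mathcomp Require Import all_classical all_reals all_analysis.
Set Implicit Arguments. Unset Strict Implicit. Unset Printing Implicit Defensive.
Import Order.TTheory GRing.Theory Num.Theory.
Import numFieldNormedType.Exports.
Local Open Scope classical_set_scope.
Local Open Scope ring_scope.

Section Defs.
Variable R : realType.

Definition cdfM (F : R -> R) : Prop :=
  {homo F : x y / x <= y} /\
  (forall x, F y @[y --> x^'+] --> F x) /\
  (exists a b : R, (forall x, x < a -> F x = 0) /\ (forall x, b <= x -> F x = 1)).

(* distortion function d : [0,1] -> [0,1] (values outside [0,1] irrelevant) *)
Definition distortion (d : R -> R) : Prop :=
  (forall x y, 0 <= x -> x <= y -> y <= 1 -> d x <= d y) /\
  (forall x, 0 <= x <= 1 -> 0 <= d x <= 1) /\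
  d 0 = 0 /\ d 1 = 1.

Definition right_cont_dist (d : R -> R) : Prop :=
  forall x, 0 <= x < 1 -> d y @[y --> x^'+] --> d x.

Definition increasing (u : R -> R) : Prop := {homo u : x y / x <= y}.

Definition left_cont (u : R -> R) : Prop :=
  forall x, u y @[y --> x^'-] --> u x.

Definition Td (d : R -> R) (F : R -> R) : R -> R :=
  fun x => lim (d (F y) @[y --> x^'+]).

(* T^u(F)(x) = P(u(X) <= x) for X ~ F.  For increasing u the set
   {y | u y <= x} is a down-set of R, whose F-probability is
   sup {F y | u y <= x} (and 0 if it is empty). *)
Definition Tu (u : R -> R) (F : R -> R) : R -> R :=
  fun x => sup ([set 0] `|` [set F y | y in [set y | u y <= x]]).

End Defs.

From HB Require Import structures.
From mathcomp Require Import all_boot all_order all_algebra.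
From mathcomp Require Import all_classical all_reals all_analysis.
From mathcomp Require Import ring lra.
Import Order.TTheory GRing.Theory Num.Theory.
Import numFieldNormedType.Exports.
Local Open Scope classical_set_scope.
Local Open Scope ring_scope.
Set Implicit Arguments.
Unset Strict Implicit.

(* T^u and T_d commute: for a cdf F the supremum defining T^u F(z) is attained
   at the quantile of level T^u F(z), and a distortion acts monotonically on
   the values of F.

   If T commutes with every T^u, take u the indicator of (x, +oo): T^u F is
   then the Bernoulli law with mass F(x) at 0, which is also T^u applied to
   the uniform law on [0, 1] with the indicator of (F(x), +oo).  Reading both
   sides of the commutation at 0 gives T F (x) = d (F x) with d := T(uniform).

   If T commutes with every T_d, use the threshold distortions d = 1_[s, 1]:
   T_d sends F to the point mass at its s-quantile.  Hence T maps point masses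
   to point masses, c |-> u(c), and acts on quantiles through u.  Uniform laws
   on intervals show that u is increasing and left-continuous, and T F = T^u F
   because both have the same quantiles. *)

Section Commutation.
Variable R : realType.
Implicit Types (F G d u : R -> R) (a b c s x y z : R).

Lemma near_at_rightP x (P : R -> Prop) : (\forall y \near x^'+, P y) <->
  exists2 e : R, 0 < e & forall y, x < y -> y < x + e -> P y.
Proof.
split.
- rewrite near_withinE => /nbhs_ballP[e e0 He]; exists e => // y xy ye.
  by apply: He => //; rewrite /ball /= ltr0_norm ?subr_lt0 //; lra.
- move=> [e e0 He]; near=> y; apply: He; near: y; first exact: nbhs_right_gt.
  by apply: nbhs_right_lt; rewrite ltrDl.
Unshelve. all: by end_near. Qed.

Lemma near_at_leftP x (P : R -> Prop) : (\forall y \near x^'-, P y) <->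
  exists2 e : R, 0 < e & forall y, x - e < y -> y < x -> P y.
Proof.
split.
- rewrite near_withinE => /nbhs_ballP[e e0 He]; exists e => // y xy ye.
  by apply: He => //; rewrite /ball /= gtr0_norm ?subr_gt0 //; lra.
- move=> [e e0 He]; near=> y; apply: He; near: y; last exact: nbhs_left_lt.
  by apply: nbhs_left_gt; rewrite gtrBl.
Unshelve. all: by end_near. Qed.

Lemma cvgr_at_right_distP F x l : F y @[y --> x^'+] --> l <->
  forall e, 0 < e -> exists2 r : R, 0 < r & forall y, x < y -> y < x + r -> `|l - F y| < e.
Proof. by rewrite cvgrPdist_lt; split => Fl e /Fl /near_at_rightP. Qed.

Lemma cvgr_at_left_distP F x l : F y @[y --> x^'-] --> l <->
  forall e, 0 < e -> exists2 r : R, 0 < r & forall y, x - r < y -> y < x -> `|l - F y| < e.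
Proof. by rewrite cvgrPdist_lt; split => Fl e /Fl /near_at_leftP. Qed.

(** * Distribution functions and quantiles *)

Lemma cdfM_ge0 F x : cdfM F -> 0 <= F x.
Proof.
move=> [Fmono [_ [a [_ [Fa _]]]]].
rewrite -(Fa (Num.min x (a - 1))); last by rewrite gt_min; apply/orP; right; lra.
by apply: Fmono; rewrite ge_min lexx.
Qed.

Lemma cdfM_le1 F x : cdfM F -> F x <= 1.
Proof.
move=> [Fmono [_ [_ [b [_ Fb]]]]].
rewrite -(Fb (Num.max x b)); last by rewrite le_max lexx orbT.
by apply: Fmono; rewrite le_max lexx.
Qed.

Definition quantile F s := inf [set x | s <= F x].

Lemma quantile_leP F s x : cdfM F -> 0 < s <= 1 ->
  (s <= F x <-> quantile F s <= x).
Proof.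
move=> cF /andP[s0 s1]; have [Fmono [Frc [a [b [Fa Fb]]]]] := cF.
have Eb : [set x | s <= F x] b by rewrite /= Fb.
have Ea : lbound [set x | s <= F x] a.
  by move=> y /= sy; rewrite leNgt; apply/negP => /Fa Fy0; lra.
split; first by move=> sx; apply: ge_inf => //; exists a.
suff sFq : s <= F (quantile F s) by move=> qx; apply: le_trans sFq (Fmono _ _ qx).
rewrite leNgt; apply/negP => Fqs.
have [r r0 Fr] := (cvgr_at_right_distP _ _ _).1 (Frc (quantile F s))
  (s - F (quantile F s)) ltac:(by rewrite subr_gt0).
have [y sy yr] : exists2 y, [set x | s <= F x] y & y < quantile F s + r.
  by apply: inf_lt; [exists b | lra].
have qy : quantile F s <= y by apply: ge_inf => //; exists a.
move: qy; rewrite le_eqVlt => /predU1P[qy|qy]; first by move: sy; rewrite /= -qy; lra.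
move: sy => /= sy; have := Fr y qy yr; have := Fmono _ _ (ltW qy).
by rewrite ler0_norm; lra.
Qed.

Lemma quantile_unique F s m : cdfM F -> 0 < s <= 1 ->
  (forall x, s <= F x <-> m <= x) -> quantile F s = m.
Proof.
move=> cF s01 Fm; apply/le_anti/andP; split.
  by apply/(quantile_leP _ cF s01)/Fm.
by apply/Fm/(quantile_leP _ cF s01).
Qed.

Lemma eq_unit_by_levels a b : 0 <= a <= 1 -> 0 <= b <= 1 ->
  (forall s, 0 < s <= 1 -> s <= a <-> s <= b) -> a = b.
Proof.
move=> /andP[a0 a1] /andP[b0 b1] ab.
apply/le_anti/andP; split; rewrite leNgt; apply/negP => lt_ab.
  by have [+ _] := ab a ltac:(apply/andP; lra); move/(_ (lexx a)); lra.
by have [_ +] := ab b ltac:(apply/andP; lra); move/(_ (lexx b)); lra.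
Qed.

(** * The transforms T^u and T_d *)

Lemma Tu_ubound u F z : cdfM F ->
  ubound ([set 0] `|` [set F y | y in [set y | u y <= z]]) 1.
Proof. by move=> cF _ [->|[y _ <-]]; [exact: ler01 | exact: cdfM_le1]. Qed.

Lemma le_Tu u F y z : cdfM F -> u y <= z -> F y <= Tu u F z.
Proof. by move=> cF uyz; apply: ub_le_sup; [exists 1; exact: Tu_ubound | right; exists y]. Qed.

Lemma Tu_ge0 u F z : cdfM F -> 0 <= Tu u F z.
Proof. by move=> cF; apply: ub_le_sup; [exists 1; exact: Tu_ubound | left]. Qed.

Lemma Tu_le u F z c : 0 <= c -> (forall y, u y <= z -> F y <= c) -> Tu u F z <= c.
Proof. by move=> c0 Fc; apply: ge_sup; [exists 0; left | move=> _ [->|[y /Fc + <-]]]. Qed.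

Lemma Tu_le1 u F z : cdfM F -> Tu u F z <= 1.
Proof. by move=> cF; apply: Tu_le => // y _; exact: cdfM_le1. Qed.

Lemma Tu_geP u F s z : increasing u -> left_cont u -> cdfM F -> 0 < s <= 1 ->
  (s <= Tu u F z <-> u (quantile F s) <= z).
Proof.
move=> umono ulc cF s01; have [Fmono _] := cF.
split; last first.
  move=> uqz; apply: le_trans (le_Tu cF uqz).
  exact/(quantile_leP _ cF s01).
move=> sT; rewrite leNgt; apply/negP => zuq.
have [r r0 ur] := (cvgr_at_left_distP _ _ _).1 (ulc (quantile F s))
  (u (quantile F s) - z) ltac:(by rewrite subr_gt0).
pose y0 := quantile F s - r / 2.
have zuy0 : z < u y0.
  have uy0q : u y0 <= u (quantile F s) by apply: umono; rewrite /y0; lra.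
  have := ur y0 ltac:(rewrite /y0; lra) ltac:(rewrite /y0; lra).
  by rewrite ger0_norm ?subr_ge0 //; lra.
have Fy0s : F y0 < s.
  by rewrite ltNge; apply/negP => /(quantile_leP _ cF s01); rewrite /y0; lra.
suff : Tu u F z <= F y0 by lra.
apply: Tu_le; first exact: cdfM_ge0.
move=> y uyz; apply: Fmono; rewrite leNgt; apply/negP => y0y.
by have := umono _ _ (ltW y0y); lra.
Qed.

Section TuCdf.
Variables (u F : R -> R).
Hypotheses (umono : increasing u) (ulc : left_cont u) (cF : cdfM F).

Lemma Tu_homo : {homo Tu u F : x y / x <= y}.
Proof.
move=> x y xy; rewrite leNgt; apply/negP => Tyx.
have s01 : 0 < Tu u F x <= 1 by rewrite (le_lt_trans (Tu_ge0 u y cF) Tyx) Tu_le1.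
have /(Tu_geP _ umono ulc cF s01) uqx := lexx (Tu u F x).
by have /(Tu_geP _ umono ulc cF s01) := le_trans uqx xy; lra.
Qed.

Lemma Tu_right_cont x : Tu u F y @[y --> x^'+] --> Tu u F x.
Proof.
apply/cvgr_at_right_distP => e e0.
have [Txe1|Txe1] := leP (Tu u F x + e) 1; last first.
  exists 1 => // y xy _; have Txy := Tu_homo (ltW xy); have := Tu_le1 u y cF.
  by rewrite ler0_norm ?subr_le0 //; lra.
have s01 : 0 < Tu u F x + e <= 1 by have := Tu_ge0 u x cF; move=> ?; apply/andP; lra.
have xuq : x < u (quantile F (Tu u F x + e)).
  by rewrite ltNge; apply/negP => /(Tu_geP _ umono ulc cF s01); lra.
exists (u (quantile F (Tu u F x + e)) - x); first lra.
move=> y xy yr; have Txy := Tu_homo (ltW xy).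
have : ~ (Tu u F x + e <= Tu u F y) by move/(Tu_geP _ umono ulc cF s01); lra.
by move/negP; rewrite -ltNge ler0_norm ?subr_le0 //; lra.
Qed.

Lemma Tu_cdfM : cdfM (Tu u F).
Proof.
have [_ [_ [a [b [Fa Fb]]]]] := cF.
split; first exact: Tu_homo.
split; first exact: Tu_right_cont.
exists (u a), (u b); split=> x hx; apply/le_anti/andP; split.
- by apply: Tu_le => // y uyx; rewrite Fa // ltNge; apply/negP => /umono; lra.
- exact: Tu_ge0.
- exact: Tu_le1.
- by rewrite -(Fb b (lexx b)) (le_Tu cF hx).
Qed.

End TuCdf.

Lemma Tu_eq1 u F z : cdfM F -> (forall y, u y <= z) -> Tu u F z = 1.
Proof.
move=> cF uz; have [_ [_ [_ [b [_ Fb]]]]] := cF.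
by apply/le_anti; rewrite Tu_le1 //= -(Fb b (lexx b)) (le_Tu cF (uz b)).
Qed.

Lemma Tu_eq0 u F z : cdfM F -> (forall y, z < u y) -> Tu u F z = 0.
Proof.
move=> cF zu; apply/le_anti; rewrite Tu_ge0 // andbT.
by apply: Tu_le => // y uyz; have := zu y; lra.
Qed.

Lemma Tu_eq_downset u F z x : cdfM F -> (forall y, u y <= z <-> y <= x) -> Tu u F z = F x.
Proof.
move=> cF ux; have [Fmono _] := cF.
apply/le_anti; rewrite (le_Tu cF (proj2 (ux x) (lexx x))) andbT.
by apply: Tu_le; [exact: cdfM_ge0 | move=> y /ux; exact: Fmono].
Qed.

Lemma distortion_comp_right_cont d G x : distortion d -> right_cont_dist d ->
  cdfM G -> d (G y) @[y --> x^'+] --> d (G x).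
Proof.
move=> [dmono _] drc cG; have [Gmono [Grc _]] := cG.
apply/cvgr_at_right_distP => e e0.
have [Gx1|Gx1] := ltP (G x) 1; last first.
  exists 1 => // y xy _; have := Gmono _ _ (ltW xy); have := cdfM_le1 y cG.
  move=> Gy1 Gxy; have -> : G y = G x by apply/le_anti/andP; lra.
  by rewrite subrr normr0.
have Gx01 : 0 <= G x < 1 by rewrite Gx1 cdfM_ge0.
have [r r0 dr] := (cvgr_at_right_distP _ _ _).1 (drc _ Gx01) e e0.
have [r' r'0 Gr'] := (cvgr_at_right_distP _ _ _).1 (Grc x) r r0.
exists r' => // y xy yr'; have Gyr := Gr' y xy yr'.
have := Gmono _ _ (ltW xy); rewrite le_eqVlt => /predU1P[->|Gxy]; first by rewrite subrr normr0.
by rewrite ler0_norm ?subr_le0 ?(ltW Gxy) // in Gyr; apply: dr => //; lra.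
Qed.

Lemma TdE d G : distortion d -> right_cont_dist d -> cdfM G -> Td d G = (fun x => d (G x)).
Proof.
move=> dd drc cG; apply/funext => x; apply: cvg_lim; first exact: norm_hausdorff.
exact: distortion_comp_right_cont.
Qed.

Lemma cdfM_comp d G : distortion d -> right_cont_dist d -> cdfM G -> cdfM (fun x => d (G x)).
Proof.
move=> dd drc cG; have [dmono [_ [d0 d1]]] := dd; have [Gmono [_ [a [b [Ga Gb]]]]] := cG.
split; first by move=> x y xy; apply: dmono; rewrite ?Gmono ?cdfM_ge0 ?cdfM_le1.
split; first by move=> x; exact: distortion_comp_right_cont.
by exists a, b; split=> x hx /=; [rewrite Ga | rewrite Gb].
Qed.

Lemma Td_cdfM d F : distortion d -> right_cont_dist d -> cdfM F -> cdfM (Td d F).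
Proof. by move=> dd drc cF; rewrite TdE //; exact: cdfM_comp. Qed.

Lemma Tu_Td u d F : increasing u -> left_cont u -> distortion d -> right_cont_dist d ->
  cdfM F -> Tu u (Td d F) = Td d (Tu u F).
Proof.
move=> umono ulc dd drc cF; have cdF := cdfM_comp dd drc cF.
rewrite (TdE dd drc cF) (TdE dd drc (Tu_cdfM umono ulc cF)).
have [dmono [d01 [d0 _]]] := dd; apply/funext => z /=.
have [Tz0|Tz_gt0] := leP (Tu u F z) 0.
  have T0 : Tu u F z = 0 by apply/le_anti; rewrite Tz0 Tu_ge0.
  rewrite T0 d0; apply/le_anti; rewrite Tu_ge0 // andbT; apply: Tu_le => // y uyz /=.
  have Fy0 : F y = 0 by apply/le_anti; rewrite cdfM_ge0 // andbT -T0 (le_Tu cF uyz).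
  by rewrite Fy0 d0.
have s01 : 0 < Tu u F z <= 1 by rewrite Tz_gt0 Tu_le1.
set m := quantile F (Tu u F z).
have um : u m <= z by apply/(Tu_geP _ umono ulc cF s01).
have FmT : F m = Tu u F z.
  by apply/le_anti; rewrite le_Tu //=; apply/(quantile_leP _ cF s01).
rewrite -FmT; apply/le_anti/andP; split; last exact: (le_Tu cdF um).
apply: Tu_le; first by have /andP[] := d01 (F m) ltac:(by rewrite cdfM_ge0 ?cdfM_le1).
move=> y uyz /=; apply: dmono; rewrite ?cdfM_ge0 ?cdfM_le1 // FmT.
exact: le_Tu.
Qed.

(** * Test laws *)

Definition unif_cdf x : R := if x < 0 then 0 else if x < 1 then x else 1.

Lemma unif_cdf_lipschitz x y : x <= y -> 0 <= unif_cdf y - unif_cdf x <= y - x.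
Proof.
move=> xy; apply/andP; rewrite /unif_cdf.
by case: (ltP x 0) => ?; case: (ltP x 1) => ?; case: (ltP y 0) => ?; case: (ltP y 1) => ?; split; lra.
Qed.

Lemma unif_cdfM : cdfM unif_cdf.
Proof.
split; first by move=> x y /unif_cdf_lipschitz /andP[]; lra.
split.
  move=> x; apply/cvgr_at_right_distP => e e0; exists e => // y xy ye.
  by have /andP[? ?] := unif_cdf_lipschitz (ltW xy); rewrite ler0_norm; lra.
exists 0, 1; split=> x hx; rewrite /unif_cdf; first by rewrite hx.
by case: (ltP x 0) => ?; case: (ltP x 1) => ?; lra.
Qed.

Lemma unif_cdf_id p : 0 <= p <= 1 -> unif_cdf p = p.
Proof. by move=> /andP[p0 p1]; rewrite /unif_cdf; case: (ltP p 0) => ?; case: (ltP p 1) => ?; lra. Qed.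

Lemma quantile_unif s : 0 < s <= 1 -> quantile unif_cdf s = s.
Proof.
move=> s01; have /andP[s0 s1] := s01; apply: quantile_unique unif_cdfM s01 _ => x.
by rewrite /unif_cdf; case: (ltP x 0) => ?; case: (ltP x 1) => ?; split; lra.
Qed.

Lemma quantile_Tu_unif u s : increasing u -> left_cont u -> 0 < s <= 1 ->
  quantile (Tu u unif_cdf) s = u s.
Proof.
move=> umono ulc s01.
apply: (quantile_unique (Tu_cdfM umono ulc unif_cdfM) s01) => x.
by rewrite (Tu_geP _ umono ulc unif_cdfM s01) quantile_unif.
Qed.

Definition dirac_cdf c x : R := if c <= x then 1 else 0.

Lemma dirac_cdfM c : cdfM (dirac_cdf c).
Proof.
rewrite /dirac_cdf; split; first by move=> x y xy; case: (leP c x) => ?; case: (leP c y) => ?; lra.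
split; last by exists c, c; split=> x hx; case: (leP c x) => ?; lra.
move=> x; apply/cvgr_at_right_distP => e e0.
have [cx|xc] := leP c x.
  by exists 1 => // y xy _; case: (leP c y) => cy; rewrite ?subrr ?normr0 //; lra.
by exists (c - x); [lra | move=> y xy yc; case: (leP c y) => cy; rewrite ?subrr ?normr0 //; lra].
Qed.

Lemma quantile_dirac c s : 0 < s <= 1 -> quantile (dirac_cdf c) s = c.
Proof.
move=> s01; have /andP[s0 s1] := s01; apply: quantile_unique (dirac_cdfM c) s01 _ => x.
by rewrite /dirac_cdf; case: (leP c x) => ?; split; lra.
Qed.

Lemma dirac_cdf_inj : injective dirac_cdf.
Proof.
move=> a b Dab; have := congr1 (fun F => F a) Dab; have := congr1 (fun F => F b) Dab.
by rewrite /dirac_cdf /= !lexx; case: (leP a b) => ?; case: (leP b a) => ?; lra.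
Qed.

Lemma dirac_distortion s : 0 < s <= 1 -> distortion (dirac_cdf s).
Proof.
move=> /andP[s0 s1]; have [smono _] := dirac_cdfM s.
split; first by move=> x y _ xy _; exact: smono.
split; first by move=> x _; rewrite /dirac_cdf; case: (leP s x) => ?; rewrite ?lexx ?ler01.
by rewrite /dirac_cdf; case: (leP s 0) => ?; case: (leP s 1) => ?; lra.
Qed.

Lemma dirac_right_cont_dist s : right_cont_dist (dirac_cdf s).
Proof. by have [_ [src _]] := dirac_cdfM s; move=> x _; exact: src. Qed.

Lemma Td_dirac s F : 0 < s <= 1 -> cdfM F -> Td (dirac_cdf s) F = dirac_cdf (quantile F s).
Proof.
move=> s01 cF; rewrite (TdE (dirac_distortion s01) (@dirac_right_cont_dist s) cF).
apply/funext => x; have := quantile_leP x cF s01; rewrite /dirac_cdf.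
by case: (leP s (F x)) => ?; case: (leP (quantile F s) x) => ?; lra.
Qed.

Lemma continuous_left_cont u : continuous u -> left_cont u.
Proof. by move=> uc x; apply: cvg_at_left_filter; exact: uc. Qed.

Lemma cst_increasing c : increasing (cst c).
Proof. by move=> x y _; rewrite lexx. Qed.

Lemma Tu_cst c F : cdfM F -> Tu (cst c) F = dirac_cdf c.
Proof.
move=> cF; apply/funext => z; rewrite /dirac_cdf.
by case: (leP c z) => cz; [apply: Tu_eq1 | apply: Tu_eq0].
Qed.

Lemma affine_increasing a b : 0 <= b -> increasing (fun t => a + t * b).
Proof. by move=> b0 x y xy; rewrite lerD2l ler_wpM2r. Qed.

Lemma affine_left_cont a b : left_cont (fun t => a + t * b).
Proof.
apply: continuous_left_cont => x.
by apply: cvgD; [exact: cvg_cst | apply: cvgMl; exact: cvg_id].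
Qed.

Definition ind_gt x y : R := if x < y then 1 else 0.

Lemma ind_gt_increasing x : increasing (ind_gt x).
Proof. by move=> y z yz; rewrite /ind_gt; case: (ltP x y) => ?; case: (ltP x z) => ?; lra. Qed.

Lemma ind_gt_left_cont x : left_cont (ind_gt x).
Proof.
move=> c; apply/cvgr_at_left_distP => e e0; rewrite /ind_gt.
have [xc|cx] := ltP x c.
  by exists (c - x); [lra | move=> y yc _; case: (ltP x y) => ?; rewrite ?subrr ?normr0 //; lra].
by exists 1 => // y _ yc; case: (ltP x y) => ?; rewrite ?subrr ?normr0 //; lra.
Qed.

Lemma Tu_ind_gt x F z : cdfM F ->
  Tu (ind_gt x) F z = if z < 0 then 0 else if z < 1 then F x else 1.
Proof.
move=> cF; rewrite /ind_gt; case: (ltP z 0) => z0; last case: (ltP z 1) => z1.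
- by apply: Tu_eq0 => // y; case: (ltP x y) => ?; lra.
- by apply: Tu_eq_downset => // y; case: (ltP x y) => ?; split; lra.
- by apply: Tu_eq1 => // y; case: (ltP x y) => ?; lra.
Qed.

(** * Operators commuting with every T^u or with every T_d *)

Section CommutingWithTu.
Variable T : (R -> R) -> R -> R.
Hypothesis T_cdfM : forall F, cdfM F -> cdfM (T F).
Hypothesis T_Tu : forall u, increasing u -> left_cont u ->
  forall F, cdfM F -> T (Tu u F) = Tu u (T F).

Lemma T_dirac_cdf c : T (dirac_cdf c) = dirac_cdf c.
Proof.
have cst_lc : left_cont (cst c) by apply: continuous_left_cont => x; exact: cvg_cst.
rewrite -{1}(Tu_cst c unif_cdfM) (T_Tu (cst_increasing c) cst_lc unif_cdfM).
exact: Tu_cst _ (T_cdfM unif_cdfM).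
Qed.

Lemma T_eq_unif_comp F x : cdfM F -> T F x = T unif_cdf (F x).
Proof.
move=> cF; have Fx01 : 0 <= F x <= 1 by rewrite cdfM_ge0 ?cdfM_le1.
have evalE G y : cdfM G -> G y = Tu (ind_gt y) G 0 by move=> cG; rewrite Tu_ind_gt // ltxx ltr01.
have ind_gtE : Tu (ind_gt x) F = Tu (ind_gt (F x)) unif_cdf.
  by have cU := unif_cdfM; apply/funext => z; rewrite !Tu_ind_gt // unif_cdf_id.
rewrite (evalE _ x (T_cdfM cF)) -(T_Tu (ind_gt_increasing x) (@ind_gt_left_cont x) cF).
rewrite ind_gtE (T_Tu (ind_gt_increasing _) (@ind_gt_left_cont _) unif_cdfM).
by rewrite -evalE //; exact: T_cdfM unif_cdfM.
Qed.

Lemma distortion_T_unif : distortion (T unif_cdf).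
Proof.
have cTU := T_cdfM unif_cdfM; have [Tmono _] := cTU.
have dirac_at0 c : T unif_cdf (dirac_cdf c 0) = dirac_cdf c 0.
  by rewrite -(T_eq_unif_comp 0 (dirac_cdfM c)) T_dirac_cdf.
split; first by move=> x y _ xy _; exact: Tmono.
split; first by move=> x _; rewrite cdfM_ge0 ?cdfM_le1.
by split; [move: (dirac_at0 1) | move: (dirac_at0 0)]; rewrite /dirac_cdf ?ler10 ?lexx.
Qed.

Lemma T_eq_Td : exists d, distortion d /\ right_cont_dist d /\ forall F, cdfM F -> T F = Td d F.
Proof.
exists (T unif_cdf); split; first exact: distortion_T_unif.
have [_ [TUrc _]] := T_cdfM unif_cdfM.
split; first by move=> x _; exact: TUrc.
move=> F cF; apply/funext => x; rewrite /Td.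
have -> : (fun y => T unif_cdf (F y)) = T F by apply/funext => y; rewrite (T_eq_unif_comp y cF).
have [_ [TFrc _]] := T_cdfM cF.
by apply/esym/cvg_lim; [exact: norm_hausdorff | exact: TFrc].
Qed.

End CommutingWithTu.

Section CommutingWithTd.
Variable T : (R -> R) -> R -> R.
Hypothesis T_cdfM : forall F, cdfM F -> cdfM (T F).
Hypothesis T_Td : forall d, distortion d -> right_cont_dist d ->
  forall F, cdfM F -> T (Td d F) = Td d (T F).

Let level1 : (0 : R) < 1 <= (1 : R).
Proof. by rewrite ltr01 lexx. Qed.

Definition Tpoint c := quantile (T (dirac_cdf c)) 1.

Lemma T_quantile F s : cdfM F -> 0 < s <= 1 ->
  T (dirac_cdf (quantile F s)) = dirac_cdf (quantile (T F) s).
Proof.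
move=> cF s01; rewrite -(Td_dirac s01 cF) -(Td_dirac s01 (T_cdfM cF)).
exact: T_Td (dirac_distortion s01) (@dirac_right_cont_dist s) _ cF.
Qed.

Lemma T_dirac_cdf_point c : T (dirac_cdf c) = dirac_cdf (Tpoint c).
Proof. by rewrite -{1}(quantile_dirac c level1) T_quantile //; exact: dirac_cdfM. Qed.

Lemma quantile_T F s : cdfM F -> 0 < s <= 1 -> quantile (T F) s = Tpoint (quantile F s).
Proof. by move=> cF s01; apply: dirac_cdf_inj; rewrite -T_quantile // T_dirac_cdf_point. Qed.

Lemma T_geP F s z : cdfM F -> 0 < s <= 1 -> (s <= T F z <-> Tpoint (quantile F s) <= z).
Proof. by move=> cF s01; rewrite -quantile_T //; exact: quantile_leP (T_cdfM cF) s01. Qed.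

Lemma Tpoint_increasing : increasing Tpoint.
Proof.
move=> a b ab; have b0 : 0 <= 2 * (b - a) by rewrite mulr_ge0 // subr_ge0.
(* T^w of the uniform law is uniform on [2a - b, b]: its quantiles at 1/2 and 1 are a and b *)
pose w t := 2 * a - b + t * (2 * (b - a)).
have wI : increasing w := affine_increasing _ b0.
have wlc : left_cont w := @affine_left_cont _ _.
have cW := Tu_cdfM wI wlc unif_cdfM.
have half01 : (0 : R) < 2^-1 <= (1 : R) by apply/andP; lra.
have w1 : w 1 = b by rewrite /w; ring.
have w_half : w 2^-1 = a by rewrite /w; field.
have /(T_geP _ cW level1) : Tpoint (quantile (Tu w unif_cdf) 1) <= Tpoint b.
  by rewrite quantile_Tu_unif // w1.
move/(le_trans (proj2 (andP half01)))/(T_geP _ cW half01).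
by rewrite quantile_Tu_unif // w_half.
Qed.

Lemma Tpoint_left_cont : left_cont Tpoint.
Proof.
move=> c; apply/cvgr_at_left_distP => e e0.
(* T^w of the uniform law is uniform on [c - 1, c] *)
pose w t := c - 1 + t * 1.
have wI : increasing w := affine_increasing _ ler01.
have wlc : left_cont w := @affine_left_cont _ _.
have cW := Tu_cdfM wI wlc unif_cdfM.
have qW s : 0 < s <= 1 -> Tpoint (quantile (Tu w unif_cdf) s) = Tpoint (c - 1 + s).
  by move=> s01; rewrite quantile_Tu_unif // /w mulr1.
pose g := T (Tu w unif_cdf) (Tpoint c - e).
have g0 : 0 <= g := cdfM_ge0 _ (T_cdfM cW).
have g1 : g < 1.
  by rewrite ltNge; apply/negP => /(T_geP _ cW level1); rewrite qW // subrK; lra.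
have s01 : 0 < (g + 1) / 2 <= 1 by apply/andP; lra.
have lt_e : Tpoint c - e < Tpoint (c - 1 + (g + 1) / 2).
  by rewrite ltNge -qW //; apply/negP => /(T_geP _ cW s01); rewrite -/g; lra.
exists (1 - (g + 1) / 2); first lra.
move=> y cy yc; have Tyc := Tpoint_increasing (ltW yc).
have Tgy : Tpoint (c - 1 + (g + 1) / 2) <= Tpoint y by apply: Tpoint_increasing; lra.
by rewrite ger0_norm ?subr_ge0 //; lra.
Qed.

Lemma T_eq_Tu : exists u, increasing u /\ left_cont u /\ forall F, cdfM F -> T F = Tu u F.
Proof.
exists Tpoint; split; first exact: Tpoint_increasing.
split; first exact: Tpoint_left_cont.
move=> F cF; have cTF := T_cdfM cF; apply/funext => z; apply: eq_unit_by_levels.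
- by rewrite cdfM_ge0 ?cdfM_le1.
- by rewrite Tu_ge0 ?Tu_le1.
- move=> s s01; have := T_geP z cF s01.
  by have := Tu_geP z Tpoint_increasing Tpoint_left_cont cF s01; tauto.
Qed.

End CommutingWithTd.

End Commutation.

Theorem proposition3 (R : realType) (T : (R -> R) -> (R -> R))
  (hT : forall F, cdfM F -> cdfM (T F)) :
  ((forall u : R -> R, increasing u -> left_cont u ->
      forall F, cdfM F -> T (Tu u F) = Tu u (T F))
   <-> exists d : R -> R, distortion d /\ right_cont_dist d /\
        forall F, cdfM F -> T F = Td d F)
  /\
  ((forall d : R -> R, distortion d -> right_cont_dist d ->
      forall F, cdfM F -> T (Td d F) = Td d (T F))
   <-> exists u : R -> R, increasing u /\ left_cont u /\
        forall F, cdfM F -> T F = Tu u F).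
Proof.
split; split.
- exact: T_eq_Td hT.
- move=> [d [dd [drc TE]]] u umono ulc F cF.
  by rewrite (TE _ (Tu_cdfM umono ulc cF)) (TE _ cF) Tu_Td.
- exact: T_eq_Tu hT.
- move=> [u [umono [ulc TE]]] d dd drc F cF.
  by rewrite (TE _ (Td_cdfM dd drc cF)) (TE _ cF) Tu_Td.
Qed.
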